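(* Define integers $M(k;r)$ for $k,r\geq 1$ by $M(k;1)=k$, $M(1;r)=1$, $M(2;r)=r+1$, and for $k\geq 3$, $r\geq 2$, $$M(k;r)=M(k-1;r)+\Delta^{M(k-1;r)}(k-1;r)+M(k;r-1)-1.$$ Then this recursion is well defined (in particular $M(k-1;r)\ge AW(k-1;r)$ whenever $\Delta^{M(k-1;r)}(k-1;r)$ is used), and $AW(k;r)\le M(k;r)$ for all $k,r\geq 1$.
   Context: A sequence of positive integers $w_1<w_2<\dots<w_n$ is an ascending wave if $w_{i+1}-w_i \geq w_i-w_{i-1}$ for $2\le i\le n-1$. For positive integers $k,r$, $AW(k;r)$ denotes the least positive integer $N$ such that every $r$-coloring of $\{1,\dots,N\}$ contains a $k$-term monochromatic ascending wave. For $k\ge 2$ and $M\ge AW(k;r)$: let $\Psi^M(k;r)$ be the set of all $r$-colorings of $\{1,\dots,M\}$; for $\psi\in\Psi^M(k;r)$ let $\chi_k(\psi)$ be the set of monochromatic $k$-term ascending waves under $\psi$; for $w=(w_1,\dots,w_k)\in\chi_k(\psi)$ let $d_{k-1}(w)=w_k-w_{k-1}$; let $\delta_k(\psi)=\min\{d_{k-1}(w): w\in\chi_k(\psi)\}$; and let $\Delta^M(k;r)=\max\{\delta_k(\psi):\psi\in\Psi^M(k;r)\}$. *)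

From mathcomp Require Import all_boot.
Set Implicit Arguments. Unset Strict Implicit. Unset Printing Implicit Defensive.

Definition ascending_wave (s : seq nat) : bool :=
  all (fun x => 0 < x) s && sorted ltn s &&
  all (fun i => nth 0 s i.+1 - nth 0 s i <= nth 0 s i.+2 - nth 0 s i.+1)
      (iota 0 (size s - 2)).

(* An r-coloring of {1,...,N} is c : {ffun 'I_N -> 'I_r}; the integer x
   (1 <= x <= N) gets colour c (x-1). *)
Definition wave_vals N k (t : k.-tuple 'I_N) : seq nat := map (fun i : 'I_N => (i : nat).+1) t.

Definition is_mono_wave N r k (c : {ffun 'I_N -> 'I_r}) (t : k.-tuple 'I_N) : bool :=
  ascending_wave (wave_vals t) && constant (map c t).

Definition aw_prop (k r N : nat) : bool :=
  [forall c : {ffun 'I_N -> 'I_r}, [exists t : k.-tuple 'I_N, is_mono_wave c t]].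

Definition AW_spec (k r n : nat) : Prop :=
  [/\ 0 < n, aw_prop k r n & forall m, 0 < m -> aw_prop k r m -> n <= m].

Definition dlast N k (t : k.-tuple 'I_N) : nat :=
  nth 0 (wave_vals t) k.-1 - nth 0 (wave_vals t) k.-2.

(* delta_k(psi): minimum of d_{k-1} over monochromatic k-term waves.  Every
   such value is < N, so N is a neutral element whenever chi_k(psi) is
   nonempty (which is guaranteed when N >= AW(k;r)). *)
Definition delta N r k (c : {ffun 'I_N -> 'I_r}) : nat :=
  \big[minn/N]_(t : k.-tuple 'I_N | is_mono_wave c t) dlast t.

Definition Delta (k r N : nat) : nat :=
  \max_(c : {ffun 'I_N -> 'I_r}) @delta N r k c.

(* The recursion M(k;r); values at k = 0 or r = 0 are irrelevant (set to 0). *)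
Fixpoint M (k r : nat) {struct k} : nat :=
  match k with
  | 0 => 0
  | 1 => 1
  | 2 => r.+1
  | (k'.+1) as k0 =>
      let fix Mk (r : nat) : nat :=
        match r with
        | 0 => 0
        | 1 => k0
        | r'.+1 => M k' r + Delta k' r (M k' r) + Mk r' - 1
        end in Mk r
  end.

From mathcomp Require Import all_boot zify.

Set Implicit Arguments.
Unset Strict Implicit.
Unset Printing Implicit Defensive.

(* Colour {1, ..., N} with N = M(k-1;r) + D + M(k;r-1) - 1, where
   D = Delta^{M(k-1;r)}(k-1;r).  The first M(k-1;r) integers contain a
   monochromatic (k-1)-term wave whose last gap is at most D.  The last
   M(k;r-1) integers start D after the first block ends: if one of them has
   the colour of that wave, it extends it to a k-term wave (its gap is at least
   D); otherwise they are coloured with r-1 colours and contain a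
   monochromatic k-term wave by induction on r. *)

Lemma ascending_waveP s : ascending_wave s <->
  [/\ forall i, i < size s -> 0 < nth 0 s i,
      forall i, i.+1 < size s -> nth 0 s i < nth 0 s i.+1 &
      forall i, i.+2 < size s ->
        nth 0 s i.+1 - nth 0 s i <= nth 0 s i.+2 - nth 0 s i.+1].
Proof.
rewrite /ascending_wave; split.
- case/andP=> /andP[/(all_nthP 0) pos /(sortedP 0) incr] /allP gaps.
  by split=> // i lti; apply: gaps; rewrite mem_iota; lia.
- case=> pos incr gaps; rewrite (introT (all_nthP 0) pos) (introT (sortedP 0) incr).
  by apply/allP => i; rewrite mem_iota => lti; apply: gaps; lia.
Qed.

Lemma ascending_wave_shift a s : ascending_wave s -> ascending_wave (map (addn a) s).
Proof.
case/ascending_waveP=> pos incr gaps; apply/ascending_waveP; rewrite size_map.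
split=> i lti; rewrite !(nth_map 0) //; try lia.
- by have := pos i lti; lia.
- by have := incr i lti; lia.
- by have := gaps i lti; lia.
Qed.

Lemma ascending_wave_rcons s x : ascending_wave s ->
  nth 0 s (size s).-1 < x ->
  nth 0 s (size s).-1 - nth 0 s (size s).-2 <= x - nth 0 s (size s).-1 ->
  ascending_wave (rcons s x).
Proof.
case/ascending_waveP=> pos incr gaps lt_last_x gap_x; apply/ascending_waveP.
rewrite size_rcons; split=> i lti; rewrite !nth_rcons.
- case: (ltngtP i (size s)) => [lt_i | gt_i | eq_i]; [exact: pos | lia | lia].
- have -> : i < size s by lia.
  case: (ltngtP i.+1 (size s)) => [lt_i1 | gt_i1 | eq_i1]; [exact: incr | lia |].
  by move: lt_last_x; rewrite -eq_i1.
- have -> : i < size s by lia.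
  have -> : i.+1 < size s by lia.
  case: (ltngtP i.+2 (size s)) => [lt_i2 | gt_i2 | eq_i2]; [exact: gaps | lia |].
  by move: gap_x; rewrite -eq_i2.
Qed.

Lemma constantE (T : eqType) x (s : seq T) : x \in s -> constant s = all (pred1 x) s.
Proof.
case: s => //= y s; rewrite inE => /orP[/eqP-> | xs]; first by rewrite eqxx.
case: eqVneq => [-> // | neq_yx]; apply/negbTE/allPn.
by exists x; rewrite //= eq_sym.
Qed.

Lemma constant_map (T U : eqType) (f : T -> U) s : constant s -> constant (map f s).
Proof.
by case: s => //= x s /allP xs; rewrite all_map; apply/allP => y /xs /eqP /= ->.
Qed.

Lemma size_wave_vals N k (t : k.-tuple 'I_N) : size (wave_vals t) = k.
Proof. by rewrite size_map size_tuple. Qed.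

Lemma wave_vals_le N k (t : k.-tuple 'I_N) i : nth 0 (wave_vals t) i <= N.
Proof.
case: (ltnP i (size (wave_vals t))) => [lti | ?]; last by rewrite nth_default.
by have /mapP[x _ ->] := mem_nth 0 lti.
Qed.

Lemma wave_vals_translate N N' k a (f : 'I_N -> 'I_N') (t : k.-tuple 'I_N) :
  (forall i, f i = a + i :> nat) ->
  wave_vals (map_tuple f t) = map (addn a) (wave_vals t).
Proof.
by move=> fE; rewrite /wave_vals /= -!map_comp; apply: eq_map => i /=; rewrite fE addnS.
Qed.

Section Colourings.

Variables (r k : nat).

Lemma mono_wave_translate N N' a (f : 'I_N -> 'I_N') (c : {ffun 'I_N' -> 'I_r})
    (t : k.-tuple 'I_N) :
  (forall i, f i = a + i :> nat) ->
  is_mono_wave [ffun i => c (f i)] t -> is_mono_wave c (map_tuple f t).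
Proof.
move=> fE /andP[wave mono]; rewrite /is_mono_wave (wave_vals_translate t fE).
rewrite ascending_wave_shift //=; congr (constant _): mono; rewrite -map_comp.
by apply: eq_map => i; rewrite /= ffunE.
Qed.

Lemma mono_wave_rcons N (c : {ffun 'I_N -> 'I_r}) (t : k.+1.-tuple 'I_N) (x : 'I_N) :
    is_mono_wave c t -> c x = c (thead t) ->
    nth 0 (wave_vals t) k < x.+1 -> dlast t <= x.+1 - nth 0 (wave_vals t) k ->
  is_mono_wave c [tuple of rcons t x].
Proof.
move=> /andP[wave mono] cx lt_last_x gap_x; apply/andP; split.
  by rewrite /wave_vals /= map_rcons ascending_wave_rcons ?size_wave_vals.
have t0 : c (thead t) \in map c t by apply: map_f; exact: mem_tnth.
rewrite /= map_rcons (constantE (x := c x)) ?mem_rcons ?mem_head //.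
by rewrite all_rcons /= eqxx cx -(constantE t0).
Qed.

Lemma dlast_gt0 N (c : {ffun 'I_N -> 'I_r}) (t : k.+2.-tuple 'I_N) :
  is_mono_wave c t -> 0 < dlast t.
Proof.
case/andP=> /ascending_waveP[_ incr _] _; rewrite /dlast /=.
by have := incr k; rewrite size_wave_vals; lia.
Qed.

Lemma delta_attained N (c : {ffun 'I_N -> 'I_r}) :
  [exists t : k.-tuple 'I_N, is_mono_wave c t] ->
  exists2 t : k.-tuple 'I_N, is_mono_wave c t & dlast t <= delta k c.
Proof.
case/existsP=> t0 mono0; case: (arg_minnP (@dlast N k) mono0) => t mono min_t.
exists t => //; rewrite /delta; apply: (big_ind (fun x => dlast t <= x)) => //.
- exact: leq_trans (leq_subr _ _) (wave_vals_le _ _).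
- by move=> x y; rewrite leq_min => -> ->.
Qed.

Lemma aw_prop_dlast_le_Delta N : aw_prop k r N ->
  forall c : {ffun 'I_N -> 'I_r},
  exists t : k.-tuple 'I_N, is_mono_wave c t && (dlast t <= Delta k r N).
Proof.
move=> /forallP aw c; have [t mono le_delta] := delta_attained (aw c).
by exists t; rewrite mono (leq_trans le_delta) ?leq_bigmax.
Qed.

End Colourings.

Lemma aw_prop_gt0 k r N : aw_prop k.+1 r.+1 N -> 0 < N.
Proof. by case: N => // /forallP/(_ [ffun=> ord0]) /existsP[t _]; case: (thead t). Qed.

Lemma Delta_gt0 k r N : aw_prop k.+2 r.+1 N -> 0 < Delta k.+2 r.+1 N.
Proof.
move=> aw; have [t /andP[mono le_Delta]] := aw_prop_dlast_le_Delta aw [ffun=> ord0].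
exact: leq_trans (dlast_gt0 mono) le_Delta.
Qed.

Lemma aw_prop_1colour k : aw_prop k.+1 1 k.+1.
Proof.
apply/forallP => c; apply/existsP; exists (ord_tuple k.+1); apply/andP; split.
- have -> : wave_vals (ord_tuple k.+1) = iota 1 k.+1.
    by rewrite /wave_vals val_ord_tuple (iotaDl 1 0) -val_enum_ord -map_comp.
  by apply/ascending_waveP; rewrite size_iota; split=> i lti; rewrite !nth_iota //; lia.
- by apply: (@all_pred1_constant _ ord0); apply/allP => i _; rewrite ord1.
Qed.

Lemma aw_prop_1term r : aw_prop 1 r.+1 1.
Proof. by apply/forallP => c; apply/existsP; exists [tuple ord0]. Qed.

(* [unlift j] turns a colouring that misses the colour [j] into one with a colour less. *)
Lemma aw_prop_avoid_colour k r N (c : {ffun 'I_N -> 'I_r.+2}) j :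
  aw_prop k r.+1 N -> (forall x, c x != j) -> exists t : k.-tuple 'I_N, is_mono_wave c t.
Proof.
move=> /forallP/(_ [ffun x => odflt ord0 (unlift j (c x))]) /existsP[t /andP[wave mono]].
move=> avoid; exists t; rewrite /is_mono_wave wave.
congr (constant _): (constant_map (lift j) mono).
rewrite -map_comp; apply: eq_map => x /=; rewrite ffunE.
by have := avoid x; rewrite eq_sym => /unlift_some[i -> _]; rewrite liftK.
Qed.

Lemma aw_prop_rec k r m D M' : 0 < D ->
    (forall c : {ffun 'I_m -> 'I_r.+2},
       exists t : k.+1.-tuple 'I_m, is_mono_wave c t && (dlast t <= D)) ->
    aw_prop k.+2 r.+1 M' ->
  aw_prop k.+2 r.+2 (m + D + M' - 1).
Proof.
move=> D_gt0 first_block second_block; apply/forallP => c; apply/existsP.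
set N := m + D + M' - 1.
have M'_gt0 := aw_prop_gt0 second_block.
have le_m_N : m <= N by rewrite /N; lia.
have lt_shift (y : 'I_M') : m + D - 1 + y < N by have := ltn_ord y; rewrite /N; lia.
pose shift y := Ordinal (lt_shift y).
have [t /andP[mono_t gap_t]] := first_block [ffun i => c (widen_ord le_m_N i)].
have vals_t : wave_vals (map_tuple (widen_ord le_m_N) t) = wave_vals t.
  by rewrite (wave_vals_translate (a := 0)) // (eq_map add0n) map_id.
have {}mono_t := mono_wave_translate (c := c) (a := 0) (f := widen_ord le_m_N)
  (fun _ => erefl) mono_t.
set t' := map_tuple _ t in vals_t mono_t.
case: (boolP [exists y, c (shift y) == c (thead t')]) =>
  [/existsP[y /eqP c_y] | /existsPn avoid].
- (* The gap before the second block is at least D, so any point of it extends t'. *)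
  exists [tuple of rcons t' (shift y)]; apply: mono_wave_rcons => //;
    rewrite /dlast vals_t /=; have := wave_vals_le t k; rewrite /dlast /= in gap_t; lia.
- have [t2 mono_t2] : exists t2 : k.+2.-tuple 'I_M', is_mono_wave [ffun y => c (shift y)] t2.
    by apply: aw_prop_avoid_colour second_block _ => y; rewrite ffunE.
  by exists (map_tuple shift t2); apply: mono_wave_translate mono_t2.
Qed.

Lemma M_rec k r :
  M k.+3 r.+2 = M k.+2 r.+2 + Delta k.+2 r.+2 (M k.+2 r.+2) + M k.+3 r.+1 - 1.
Proof. by []. Qed.

Lemma aw_prop_M k r : aw_prop k.+1 r.+1 (M k.+1 r.+1).
Proof.
elim: k r => [|[|k] IHk] r; first exact: aw_prop_1term.
- elim: r => [|r IHr]; first exact: aw_prop_1colour.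
  have -> : M 2 r.+2 = 1 + 1 + M 2 r.+1 - 1 by rewrite /=; lia.
  by apply: aw_prop_rec IHr => // c; exists [tuple ord0].
- elim: r => [|r IHr]; first exact: aw_prop_1colour.
  have aw := IHk r.+1; rewrite M_rec; apply: aw_prop_rec IHr.
  + exact: Delta_gt0 aw.
  + exact: aw_prop_dlast_le_Delta aw.
Qed.

Lemma AW_spec_le k r N : 0 < N -> aw_prop k r N -> exists n, AW_spec k r n /\ n <= N.
Proof.
move=> N_gt0 aw_N; have ex_n : exists n, (0 < n) && aw_prop k r n by exists N; rewrite N_gt0.
case: (ex_minnP ex_n) => n /andP[n_gt0 aw_n] min_n.
exists n; split; last by apply: min_n; rewrite N_gt0.
by split=> // m m_gt0 aw_m; apply: min_n; rewrite m_gt0.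
Qed.

Lemma AW_le_M k r : exists n, AW_spec k.+1 r.+1 n /\ n <= M k.+1 r.+1.
Proof. exact: AW_spec_le (aw_prop_gt0 (aw_prop_M k r)) (aw_prop_M k r). Qed.

Theorem lemma1p1 :
  (forall k r : nat, 3 <= k -> 2 <= r ->
     exists n, AW_spec k.-1 r n /\ n <= M k.-1 r) /\
  (forall k r : nat, 1 <= k -> 1 <= r ->
     exists n, AW_spec k r n /\ n <= M k r).
Proof.
split=> [[|[|k]] [|r] // | [|k] [|r] //] _ _; exact: AW_le_M.
Qed.
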